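(* Let $n\ge 2$ and let $D$ be an $n\times n$ unit spherical Euclidean distance matrix (EDM) of embedding dimension $r$, and let $w\in\mathbb{R}^n$ be a vector with $Dw=e$. Define the symmetric matrix $\Delta$ by $D = 2(E-I) + 2\Delta$. Then $\lambda_{\max}(\Delta)=1$, $w$ is an eigenvector of $\Delta$ associated with $\lambda_{\max}(\Delta)$, and $r = n - m(\lambda_{\max}(\Delta))$, where $m(\lambda_{\max}(\Delta))$ denotes the multiplicity of the eigenvalue $\lambda_{\max}(\Delta)$.
   Context: $e$ denotes the all-ones vector in $\mathbb{R}^n$, $E$ the $n\times n$ all-ones matrix, $I$ the $n\times n$ identity matrix. An $n\times n$ matrix $D=(d_{ij})$ is a Euclidean distance matrix (EDM) if there exist points $p^1,\dots,p^n$ in some Euclidean space with $d_{ij}=\|p^i-p^j\|^2$ for all $i,j$; the dimension of the affine span of these points is the embedding dimension of $D$. $D$ is a unit spherical EDM if such points can be chosen to lie on a sphere of radius $1$. For a real symmetric matrix $A$, $\lambda_{\max}(A)$ is its largest eigenvalue. *)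

From HB Require Import structures.
From mathcomp Require Import all_boot all_order all_algebra.
From mathcomp Require Import reals.
Set Implicit Arguments. Unset Strict Implicit. Unset Printing Implicit Defensive.
Import Order.TTheory GRing.Theory Num.Theory.
Local Open Scope ring_scope.

Definition sqdist {R : ringType} {k : nat} (u v : 'rV[R]_k) : R :=
  \sum_(l < k) (u 0 l - v 0 l) ^+ 2.

Definition realizes {R : ringType} {n k : nat} (D : 'M[R]_n) (P : 'M[R]_(n, k)) :=
  forall i j, D i j = sqdist (row i P) (row j P).

(* dimension of the affine span of the rows of P: rank [e P] - 1 *)
Definition affdim {R : fieldType} {n k : nat} (P : 'M[R]_(n, k)) : nat :=
  (\rank (row_mx (const_mx 1 : 'M[R]_(n, 1)) P)).-1.

Definition is_EDM {R : ringType} {n : nat} (D : 'M[R]_n) :=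
  exists k (P : 'M[R]_(n, k)), realizes D P.

Definition EDM_embdim {R : fieldType} {n : nat} (D : 'M[R]_n) (r : nat) :=
  exists k (P : 'M[R]_(n, k)), realizes D P /\ affdim P = r.

(* D is a unit spherical EDM: realized by points lying on a sphere of radius 1
   whose center lies in the affine span of the points (i.e. the radius of D,
   the circumradius of its generating points, is 1). *)
Definition unit_spherical_EDM {R : fieldType} {n : nat} (D : 'M[R]_n) :=
  exists k (P : 'M[R]_(n, k)) (c : 'rV[R]_k),
    [/\ realizes D P,
        (forall i, sqdist (row i P) c = 1) &
        exists a : 'rV[R]_n, \sum_i a 0 i = 1 /\ c = a *m P].

Definition is_lambda_max {R : realFieldType} {n : nat} (A : 'M[R]_n) (l : R) :=
  eigenvalue A l /\ forall m, eigenvalue A m -> m <= l.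

Definition is_eigenvector {R : ringType} {n : nat} (A : 'M[R]_n) (l : R) (w : 'cV[R]_n) :=
  w != 0 /\ A *m w = l *: w.

(* multiplicity of eigenvalue l of A (dimension of its eigenspace; equal to the
   algebraic multiplicity for symmetric real matrices) *)
Definition eig_mult {R : fieldType} {n : nat} (A : 'M[R]_n) (l : R) : nat :=
  \rank (eigenspace A l).

From HB Require Import structures.
From mathcomp Require Import all_boot all_order all_algebra.
From mathcomp Require Import reals.
From mathcomp Require Import zify ring.
Set Implicit Arguments. Unset Strict Implicit. Unset Printing Implicit Defensive.
Import Order.TTheory GRing.Theory Num.Theory.
Local Open Scope ring_scope.

(* Translate the points so that the center c of the unit sphere is the origin;
   the resulting matrix Q has unit rows, so D = 2 (E - Q Q^T) and
   Delta = I - Q Q^T.  As Q Q^T is positive semidefinite, no eigenvalue of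
   Delta exceeds 1, and the eigenspace of 1 is the kernel of Q Q^T, of
   dimension n - rank Q.  Since c = a P is an affine combination of the points,
   a Q = 0; applying a to D w = e gives e^T w = 1/2, whence Q Q^T w = 0.
   Finally a also separates e from the columns of Q, so the affine dimension
   rank [e P] - 1 = rank [e Q] - 1 equals rank Q; and the affine dimension of
   any realization of D is the rank of a Gram matrix computed from D alone. *)

Section EDMGram.
Variable R : realFieldType.

Lemma mulmx_trmx_entry {m p k} (A : 'M[R]_(m, k)) (B : 'M[R]_(p, k)) i j :
  (A *m B^T) i j = \sum_l A i l * B j l.
Proof. by rewrite !mxE; apply: eq_bigr => l _; rewrite mxE. Qed.

Lemma mulmx_trmx_row {m p k} (A : 'M[R]_(m, k)) (B : 'M[R]_(p, k)) i j :
  (A *m B^T) i j = (row i A *m (row j B)^T) 0 0.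
Proof. by rewrite !mulmx_trmx_entry; apply: eq_bigr => l _; rewrite !mxE. Qed.

Lemma gram_eq0 {m k} (M : 'M[R]_(m, k)) : M *m M^T = 0 -> M = 0.
Proof.
move=> MMt0; apply/matrixP => i l; rewrite mxE.
have := congr1 (fun A : 'M[R]_m => A i i) MMt0; rewrite mulmx_trmx_entry mxE.
move/psumr_eq0P => sq0.
apply/eqP; rewrite -[_ == 0]orbb -mulf_eq0 sq0 // => l' _.
by rewrite -expr2 sqr_ge0.
Qed.

Lemma kermx_gram {m k} (M : 'M[R]_(m, k)) : (kermx (M *m M^T) == kermx M)%MS.
Proof.
apply/andP; split; rewrite sub_kermx; last by rewrite mulmxA mulmx_ker mul0mx.
apply/eqP/gram_eq0.
by rewrite trmx_mul mulmxA -[X in X *m _]mulmxA mulmx_ker mul0mx.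
Qed.

Lemma mxrank_gram {m k} (M : 'M[R]_(m, k)) : \rank (M *m M^T) = \rank M.
Proof.
have := eqmx_rank (kermx_gram M); rewrite !mxrank_ker.
have := rank_leq_row (M *m M^T); have := rank_leq_row M; lia.
Qed.

Lemma gram_form_gt0 {k} (u : 'rV[R]_k) : u != 0 -> 0 < (u *m u^T) 0 0.
Proof.
move=> u_neq0; rewrite lt0r mulmx_trmx_entry sumr_ge0 ?andbT; last first.
  by move=> l _; rewrite -expr2 sqr_ge0.
apply: contra u_neq0 => /eqP uut0; apply/eqP/gram_eq0/matrixP => x y.
by rewrite !ord1 mulmx_trmx_entry uut0 mxE.
Qed.

Lemma eigenvalue_symmetric {n} (A : 'M[R]_n) l (w : 'cV[R]_n) :
  A^T = A -> w != 0 -> A *m w = l *: w -> eigenvalue A l.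
Proof.
move=> symA w_neq0 Aw; apply/eigenvalueP; exists w^T; last by rewrite trmx_eq0.
by rewrite -{1}symA -trmx_mul Aw linearZ.
Qed.

Lemma eigenvalue_1_sub_gram_le {m k} (M : 'M[R]_(m, k)) l :
  eigenvalue (1%:M - M *m M^T) l -> l <= 1.
Proof.
case/eigenvalueP => v vA v_neq0.
have vG : v *m (M *m M^T) = (1 - l) *: v.
  by rewrite scalerBl scale1r -vA mulmxBr mulmx1 opprB addrC subrK.
have : 0 <= (v *m (M *m M^T) *m v^T) 0 0.
  rewrite mulmxA -mulmxA -trmx_mul mulmx_trmx_entry.
  by apply: sumr_ge0 => l' _; rewrite -expr2 sqr_ge0.
by rewrite vG -scalemxAl mxE pmulr_lge0 ?gram_form_gt0 // subr_ge0.
Qed.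

Lemma eig_mult_1_sub_gram {m k} (M : 'M[R]_(m, k)) :
  eig_mult (1%:M - M *m M^T) 1 = (m - \rank M)%N.
Proof.
have kerN : (kermx (- (M *m M^T)) == kermx (M *m M^T))%MS.
  apply/andP; split; rewrite sub_kermx.
    by rewrite -oppr_eq0 -mulmxN mulmx_ker.
  by rewrite mulmxN oppr_eq0 mulmx_ker.
rewrite /eig_mult /eigenspace addrAC subrr add0r (eqmx_rank kerN).
by rewrite (eqmx_rank (kermx_gram M)) mxrank_ker.
Qed.

Lemma mxrank_row_mx_subr {m k} (e : 'cV[R]_m) (M : 'M[R]_(m, k)) (x : 'rV[R]_k) :
  \rank (row_mx e (M - e *m x)) = \rank (row_mx e M).
Proof.
have shift M' (y : 'rV[R]_k) :
    row_mx e (M' + e *m y) = row_mx e M' *m block_mx 1%:M y 0 1%:M.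
  by rewrite mul_row_block !mulmx1 !mulmx0 addr0 addrC.
apply/eqP; rewrite eqn_leq; apply/andP; split.
  by rewrite -mulmxN shift mxrankM_maxl.
by rewrite -{1}(subrK (e *m x) M) shift mxrankM_maxl.
Qed.

Lemma mxrank_row_mx_sep {m k} (e : 'cV[R]_m) (a : 'rV[R]_m) (M : 'M[R]_(m, k)) :
  a *m e = 1 -> a *m M = 0 -> \rank (row_mx e M) = (\rank M).+1.
Proof.
move=> ae1 aM0.
rewrite -mxrank_tr tr_row_mx -(addsmxE e^T M^T).
have cap0 : (e^T :&: M^T)%MS = 0.
  have /submxP [X defX] := capmxSl e^T M^T.
  have /submxP [Y defY] := capmxSr e^T M^T.
  have : (e^T :&: M^T)%MS *m a^T = X.
    by rewrite defX -mulmxA -trmx_mul ae1 trmx1 mulmx1.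
  rewrite {1}defY -mulmxA -trmx_mul aM0 trmx0 mulmx0 defX => <-.
  by rewrite mul0mx.
have := mxrank_sum_cap e^T M^T; rewrite cap0 mxrank0 addn0 => ->.
rewrite !mxrank_tr -[\rank e]mxrank_tr rank_rV; suff -> : e^T != 0 by [].
apply: contraPneq ae1 => /(congr1 trmx); rewrite trmxK trmx0 => ->.
rewrite mulmx0 => /matrixP/(_ 0 0); rewrite !mxE => /eqP.
by rewrite eq_sym oner_eq0.
Qed.

Lemma mulmx_const1 {n} (a : 'rV[R]_n) :
  \sum_i a 0 i = 1 -> a *m const_mx 1 = 1.
Proof.
move=> sum_a; apply/matrixP => x y; rewrite !ord1 !mxE.
by under eq_bigr do rewrite mxE mulr1.
Qed.

Lemma mulmx_sub_barycenter {n k} (P : 'M[R]_(n, k)) (a : 'rV[R]_n) :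
  \sum_i a 0 i = 1 -> a *m (P - const_mx 1 *m (a *m P)) = 0.
Proof. by move=> sum_a; rewrite mulmxBr !mulmxA mulmx_const1 // mul1mx subrr. Qed.

Lemma affdim_barycentric {n k} (P : 'M[R]_(n, k)) (a : 'rV[R]_n) :
  \sum_i a 0 i = 1 -> affdim P = \rank (P - const_mx 1 *m (a *m P)).
Proof.
move=> sum_a; rewrite /affdim -(mxrank_row_mx_subr _ _ (a *m P)).
by rewrite (mxrank_row_mx_sep (mulmx_const1 sum_a)) ?mulmx_sub_barycenter.
Qed.

Lemma row_sub_const_mul {n k} (P : 'M[R]_(n, k)) (c : 'rV[R]_k) i :
  row i (P - const_mx 1 *m c) = row i P - c.
Proof. by apply/rowP => l; rewrite !mxE big_ord1 !mxE mul1r. Qed.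

Lemma sqdist_polar {k} (u v c : 'rV[R]_k) :
  sqdist u v = sqdist u c + sqdist v c - 2 * ((u - c) *m (v - c)^T) 0 0.
Proof.
rewrite /sqdist mulmx_trmx_entry mulr_sumr -big_split -sumrB /=.
by apply: eq_bigr => l _; rewrite !mxE; ring.
Qed.

(* The Gram matrix of the points translated so that [p^i0] becomes the origin,
   recovered from [D] by polarization. *)
Definition centered_gram {n} (D : 'M[R]_n) (i0 : 'I_n) : 'M[R]_n :=
  \matrix_(i, j) ((D i i0 + D j i0 - D i j) / 2).

Lemma affdim_realizes {n k} (D : 'M[R]_n) (P : 'M[R]_(n, k)) (i0 : 'I_n) :
  realizes D P -> affdim P = \rank (centered_gram D i0).
Proof.
move=> DP; have delta_sum : \sum_i (delta_mx 0 i0 : 'rV[R]_n) 0 i = 1.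
  rewrite (bigD1 i0) //= mxE !eqxx big1 ?addr0 // => i /negPf.
  by rewrite mxE andbC => ->.
rewrite (affdim_barycentric P delta_sum) -rowE -mxrank_gram; congr (\rank _).
apply/matrixP => i j; rewrite [centered_gram _ _ _ _]mxE !DP.
rewrite mulmx_trmx_row !row_sub_const_mul.
rewrite (sqdist_polar (row i P) (row j P) (row i0 P)).
by field.
Qed.

Lemma sphere_gram {n k} (D : 'M[R]_n) (P : 'M[R]_(n, k)) (c : 'rV[R]_k) :
  realizes D P -> (forall i, sqdist (row i P) c = 1) ->
  D = 2%:R *: (const_mx 1 - (P - const_mx 1 *m c) *m (P - const_mx 1 *m c)^T).
Proof.
move=> DP Pc; apply/matrixP => i j; set Q := P - _.
have -> : (2%:R *: (const_mx 1 - Q *m Q^T)) i j = 2 * (1 - (Q *m Q^T) i j).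
  by rewrite !mxE.
rewrite DP (sqdist_polar _ _ c) !Pc [in RHS]mulmx_trmx_row !row_sub_const_mul.
by ring.
Qed.

Lemma gram_mulmx_solution_eq0 {n} (D G : 'M[R]_n) (a : 'rV[R]_n) (w : 'cV[R]_n) :
  D = 2%:R *: (const_mx 1 - G) -> a *m G = 0 -> \sum_i a 0 i = 1 ->
  D *m w = const_mx 1 -> G *m w = 0.
Proof.
move=> DG aG sum_a Dw; pose s := \sum_i w i 0.
have defG : G = const_mx 1 - 2%:R^-1 *: D.
  by rewrite DG scalerA mulVf ?pnatr_eq0 // scale1r opprB addrC subrK.
have Gw : G *m w = const_mx (s - 2%:R^-1).
  rewrite defG mulmxBl -scalemxAl Dw; apply/matrixP => i j.
  rewrite !mxE mulr1 ord1; congr (_ - _).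
  by apply: eq_bigr => l _; rewrite mxE mul1r.
have s_half : s - 2%:R^-1 = 0.
  have := congr1 (fun M : 'M[R]_1 => M 0 0) (mulmxA a G w).
  rewrite aG mul0mx Gw !mxE.
  by under eq_bigr do rewrite mxE; rewrite -mulr_suml sum_a mul1r.
by rewrite Gw s_half; apply/matrixP => i j; rewrite !mxE.
Qed.

End EDMGram.

Theorem lemma3p2 (R : realType) (n r : nat) (D Delta : 'M[R]_n) (w : 'cV[R]_n) :
  (2 <= n)%N ->
  unit_spherical_EDM D ->
  EDM_embdim D r ->
  D *m w = const_mx 1 ->
  D = 2%:R *: (const_mx 1 - 1%:M) + 2%:R *: Delta ->
  [/\ is_lambda_max Delta 1,
      is_eigenvector Delta 1 w &
      r = (n - eig_mult Delta 1)%N].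
Proof.
move=> n_ge2 [k [P [c [DP Pc [a [sum_a defc]]]]]] [k' [P' [DP' <-]]] Dw DDelta.
pose i0 : 'I_n := Ordinal (ltnW n_ge2).
move: (sphere_gram DP Pc); rewrite defc; set Q := P - _ => DG.
have defDelta : Delta = 1%:M - Q *m Q^T.
  apply: (@scalerI _ _ 2%:R); first by rewrite pnatr_eq0.
  rewrite -[_ *: Delta](addKr (2%:R *: (const_mx 1 - 1%:M))) -DDelta DG.
  by rewrite -scalerN -scalerDr opprB addrA subrK.
have aG : a *m (Q *m Q^T) = 0 by rewrite mulmxA mulmx_sub_barycenter // mul0mx.
have Gw := gram_mulmx_solution_eq0 DG aG sum_a Dw.
have w_neq0 : w != 0.
  apply: contraPneq Dw => ->; rewrite mulmx0 => /matrixP/(_ i0 0).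
  by rewrite !mxE => /eqP; rewrite eq_sym oner_eq0.
have Deltaw : Delta *m w = 1 *: w.
  by rewrite defDelta mulmxBl mul1mx Gw subr0 scale1r.
split=> //; first split.
- apply: eigenvalue_symmetric w_neq0 Deltaw.
  by rewrite defDelta linearB /= trmx1 trmx_mul trmxK.
- by move=> l; rewrite defDelta => /eigenvalue_1_sub_gram_le.
rewrite defDelta eig_mult_1_sub_gram.
rewrite (affdim_realizes i0 DP') -(affdim_realizes i0 DP).
by rewrite (affdim_barycentric P sum_a) subKn ?rank_leq_row.
Qed.
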